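(* Let $a<b$ with $[a,b]\subset[0,\infty)$, let $f,g:[a,b]\to\mathbb{R}$ be integrable with $0\le g(t)\le1$ for all $t\in[a,b]$ and such that $\int_a^b g(t)f'(t)\,dt$ exists. Suppose $f$ is absolutely continuous on $[a,b]$ and $|f'|^q$ is $s$-concave on $[a,b]$ for some fixed $s\in(0,1]$ and some $q>1$. Let $\lambda:=\int_a^b g(t)\,dt$. Then $$\left|\int_a^{a+\lambda} f(t)\,dt-\int_a^b f(t)g(t)\,dt\right|\le2^{(s-1)/q}\left[\lambda^2\left|f'\!\left(a+\tfrac{\lambda}{2}\right)\right|+(b-a-\lambda)^2\left|f'\!\left(\tfrac{a+b+\lambda}{2}\right)\right|\right],$$ and $$\left|\int_a^b f(t)g(t)\,dt-\int_{b-\lambda}^b f(t)\,dt\right|\le2^{(s-1)/q}\left[\lambda^2\left|f'\!\left(b-\tfrac{\lambda}{2}\right)\right|+(b-a-\lambda)^2\left|f'\!\left(\tfrac{a+b-\lambda}{2}\right)\right|\right].$$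
   Context: For fixed $s\in(0,1]$, a function $h:I\to\mathbb{R}$ on an interval $I\subset[0,\infty)$ is $s$-concave (in the second sense) if $h(\alpha x+\beta y)\ge\alpha^s h(x)+\beta^s h(y)$ for all $x,y\in I$ and all $\alpha,\beta\ge0$ with $\alpha+\beta=1$. *)

From HB Require Import structures.
From mathcomp Require Import all_boot all_order all_algebra.
From mathcomp Require Import all_classical all_reals all_analysis.
Set Implicit Arguments. Unset Strict Implicit. Unset Printing Implicit Defensive.
Import Order.TTheory GRing.Theory Num.Theory.
Import numFieldNormedType.Exports.
Local Open Scope classical_set_scope.
Local Open Scope ring_scope.

Definition s_concave {R : realType} (s : R) (I : set R) (h : R -> R) : Prop :=
  forall x y : R, I x -> I y ->
  forall al be : R, 0 <= al -> 0 <= be -> al + be = 1 ->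
    al `^ s * h x + be `^ s * h y <= h (al * x + be * y).

Definition abs_cont_on {R : realType} (a b : R) (f : R -> R) : Prop :=
  forall e : R, 0 < e -> exists2 d : R, 0 < d &
    forall (n : nat) (u v : nat -> R),
      (forall i, (i < n)%N -> a <= u i /\ u i <= v i /\ v i <= b) ->
      (forall i j, (i < j)%N -> (j < n)%N -> v i <= u j) ->
      \sum_(i < n) (v i - u i) < d ->
      \sum_(i < n) `|f (v i) - f (u i)| < e.

From HB Require Import structures.
From mathcomp Require Import all_boot all_order all_algebra.
From mathcomp Require Import all_classical all_reals all_analysis.
From mathcomp Require Import ring lra.
Import Order.TTheory GRing.Theory Num.Theory.
Import numFieldNormedType.Exports.
Local Open Scope classical_set_scope.
Local Open Scope ring_scope.
Set Implicit Arguments.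
Unset Strict Implicit.
Unset Printing Implicit Defensive.

(* Put c := a + lam.  As the weight g has mass c - a on [a, b],
     int_a^c f - int_a^b f g = int_a^c (f - f c) (1 - g) - int_c^b (f - f c) g,
   and since 0 <= g <= 1 it suffices to bound |f t - f c| by a multiple of
   |t - c| on [a, c] and on [c, b]; integrating |t - c| then produces the
   factors (c - a)^2 / 2 and (b - c)^2 / 2.  On a piece [p, p'] of [a, b],
   s-concavity of |f'|^q at t and p + p' - t with weights 1/2, 1/2 gives
   |f' t| <= 2^(s/q) |f' ((p + p') / 2)|, and an absolutely continuous f whose
   derivative exists and is bounded by K off a null set is K-Lipschitz.  The
   constant comes from 2^(s/q) / 2 <= 2^((s-1)/q), as q >= 1.  The second
   inequality is the first one for the weight 1 - g and c := b - lam.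

   The Lipschitz bound is proved by real induction along [x, y]: cover the
   null set by an open set U of small measure; outside U the derivative gives
   the local Lipschitz estimate, while the variation of f on the finitely many
   intervals spent inside U is small by absolute continuity. *)

Section RealLemmas.
Variable R : realType.
Notation mu := (@lebesgue_measure R).

Lemma real_induction (x y : R) (P : R -> Prop) : x <= y -> P x ->
  (forall T, x <= T <= y -> exists2 r : R, 0 < r &
    forall t T', x <= t <= T -> T - r < t -> P t ->
    T <= T' <= y -> T' < T + r -> P T') ->
  P y.
Proof.
move=> xy Px step.
pose S := [set t | x <= t <= y /\ P t].
have Sx : S x by split; rewrite ?lexx ?xy.
have Sy : ubound S y by move=> t [/andP[]].
have hS : has_sup S by split; [exists x | exists y].
have xT : x <= sup S by exact: sup_upper_bound.
have Ty : sup S <= y by apply: ge_sup => //; exists x.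
have /step [r r0 hr] : x <= sup S <= y by rewrite xT.
have [t [/andP[xt ty] Pt] Tt] := sup_adherent r0 hS.
have tT : t <= sup S by apply: sup_upper_bound => //; split; rewrite ?xt.
have hr2 T' : sup S <= T' <= y -> T' < sup S + r -> P T'.
  by apply: (hr t) => //; rewrite xt.
have [yT|Ty'] := ltP y (sup S + r / 2); first by apply: hr2; lra.
have : S (sup S + r / 2) by split; [lra | apply: hr2; lra].
by move/(sup_upper_bound hS) => ?; exfalso; lra.
Qed.

Lemma is_derive_locally_lipschitz (f : R -> R) (t d K : R) :
  is_derive t 1 f d -> `|d| < K ->
  exists2 r : R, 0 < r & forall u, `|u - t| < r -> `|f u - f t| <= K * `|u - t|.
Proof.
move=> [fd <-] dK.
have dK0 : 0 < K - `|'D_1 f t| by rewrite subr_gt0.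
have := @cvgr_dist_lt _ _ _ _ _ _ _ fd _ dK0; rewrite near_withinE near_simpl.
(* the hole discharges the [Filter 0^'] premise *)
move=> /(_ _) /nbhs_ballP [r /= r0 Hr]; exists r => // u ut.
have [->|u_neq_t] := eqVneq u t; first by rewrite !subrr normr0 mulr0.
have ut0 : u - t != 0 by rewrite subr_eq0.
have : ball 0 r (u - t) by rewrite /ball /= sub0r normrN.
move=> /Hr /(_ ut0); rewrite /= /GRing.scale /= mulr1 subrK => close.
have slope : `|(u - t)^-1 * (f u - f t)| <= K.
  rewrite -[_ * _](subrKC ('D_1 f t)) (le_trans (ler_normD _ _)) //.
  by rewrite addrC -lerBrDr distrC ltW.
have -> : f u - f t = (u - t) * ((u - t)^-1 * (f u - f t)).
  by rewrite mulrA mulfV // mul1r.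
by rewrite normrM mulrC ler_wpM2r.
Qed.

Lemma lebesgue_null_open_cover (N : set R) (d : R) :
  measurable N -> mu N = 0%E -> 0 < d ->
  exists U : set R, [/\ open U, N `<=` U & (mu U < d%:E)%E].
Proof.
move=> mN N0 d0.
have Nfin : (mu N < +oo)%E by rewrite N0 ltry.
have [U [oU NU UNd]] := lebesgue_regularity_outer mN Nfin d0.
exists U; split => //.
have mU : measurable U := measurable_realfun.open_measurable oU.
rewrite (measureDI mu mU mN) (le_lt_trans _ UNd) // -[leRHS]adde0 leeD2l //.
by rewrite -N0 le_measure // inE; [exact: measurableI|].
Qed.

Lemma lebesgue_sum_itv_le (U : set R) (n : nat) (u v : nat -> R) :
  measurable U ->
  (forall i, (i < n)%N -> u i <= v i /\ `[u i, v i[ `<=` U) ->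
  (forall i j, (i < j)%N -> (j < n)%N -> v i <= u j) ->
  ((\sum_(i < n) (v i - u i))%:E <= mu U)%E.
Proof.
move=> mU uvU disj.
pose F i := if (i < n)%N then `[u i, v i[%classic else set0.
have mF i : measurable (F i) by rewrite /F; case: ifP.
have tF : trivIset setT F.
  move=> i j _ _ [z []]; rewrite /F.
  case: ifP => // hi; case: ifP => // hj.
  rewrite /= !in_itv /= => /andP[ui vi] /andP[uj vj].
  have [ij|ji|//] := ltngtP i j.
  - by have := lt_le_trans vi (le_trans (disj _ _ ij hj) uj); rewrite ltxx.
  - by have := lt_le_trans vj (le_trans (disj _ _ ji hi) ui); rewrite ltxx.
have := measure_bigsetU mu mF tF n.
have -> : (\sum_(i < n) mu (F i) = \sum_(i < n) (v i - u i)%:E)%E.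
  apply: eq_bigr => i _; rewrite /F ltn_ord lebesgue_measure_itv /= lte_fin.
  have [//|vu] := ltP (u i) (v i).
  have uv := (uvU i (ltn_ord i)).1.
  by rewrite (@le_anti _ _ (v i) (u i)) ?vu ?uv // subrr.
rewrite sumEFin => <-.
apply: le_measure; rewrite ?inE //.
  exact: (@bigsetU_measurable _ _ _ _ _ (fun i : 'I_n => F i)).
move=> z /(@bigsetU_bigcup _ F n) [k _]; rewrite /F; case: ifP => // kn.
exact: (uvU k kn).2.
Qed.

End RealLemmas.

Section LipschitzUpTo.
Variables (R : realType) (f : R -> R).

(* [|f t - f x| <= K (t - x)] up to the variation of [f] on finitely many
   non-overlapping subintervals of [[x, t]] lying in [U]; absolute continuity
   makes this slack small when [U] has small measure. *)
Definition lipschitz_upto (U : set R) (K x t : R) : Prop :=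
  exists n (u v : nat -> R),
  [/\ forall i, (i < n)%N ->
        [/\ x <= u i, u i <= v i, v i <= t & `[u i, v i[ `<=` U],
      forall i j, (i < j)%N -> (j < n)%N -> v i <= u j &
      `|f t - f x| <= K * (t - x) + \sum_(i < n) `|f (v i) - f (u i)|].

Lemma lipschitz_upto_refl U K x : lipschitz_upto U K x x.
Proof.
exists 0%N, (fun=> 0), (fun=> 0); split => //.
by rewrite big_ord0 !subrr normr0 mulr0 addr0.
Qed.

Lemma lipschitz_upto_lipschitz U K x t t' : t <= t' ->
  `|f t' - f t| <= K * (t' - t) ->
  lipschitz_upto U K x t -> lipschitz_upto U K x t'.
Proof.
move=> tt' ft [n [u [v [uv disj ft_x]]]]; exists n, u, v; split => //.
  move=> i /uv [? ? vt ?]; split => //; exact: le_trans tt'.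
have := ler_distD (f t) (f t') (f x); rewrite distrC; lra.
Qed.

Lemma lipschitz_upto_cover U K x t t' : 0 <= K -> x <= t -> t <= t' ->
  `[t, t'[ `<=` U -> lipschitz_upto U K x t -> lipschitz_upto U K x t'.
Proof.
move=> K0 xt tt' tt'U [n [u [v [uv disj ft_x]]]].
exists n.+1, (fun i => if i == n then t else u i),
  (fun i => if i == n then t' else v i); split.
- move=> i; rewrite ltnS leq_eqVlt => /orP[/eqP ->|ilt]; rewrite ?eqxx.
    by split.
  rewrite (ltn_eqF ilt); have [? ? ? ?] := uv i ilt; split => //.
  exact: le_trans tt'.
- move=> i j ij; rewrite ltnS leq_eqVlt => /orP[/eqP jn|jlt].
    by subst j; rewrite eqxx (ltn_eqF ij); have [] := uv i ij.
  by rewrite (ltn_eqF jlt) (ltn_eqF (ltn_trans ij jlt)); exact: disj.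
rewrite big_ord_recr /= eqxx.
under eq_bigr => i _ do rewrite (ltn_eqF (ltn_ord i)).
have := ler_distD (f t) (f t') (f x).
have : K * t <= K * t' by rewrite ler_wpM2l.
lra.
Qed.

End LipschitzUpTo.

Section AbsContLipschitz.
Variables (R : realType) (a b : R) (f df : R -> R) (N : set R).
Hypotheses (fac : abs_cont_on a b f) (mN : measurable N)
  (N0 : lebesgue_measure N = 0%E)
  (fder : forall t, a <= t <= b -> ~ N t -> is_derive t 1 f (df t)).

Lemma abs_cont_lipschitz_eps (K e x y : R) : a <= x -> x <= y -> y <= b ->
  (forall t, x <= t <= y -> `|df t| < K) -> 0 < e ->
  `|f y - f x| <= K * (y - x) + e.
Proof.
move=> ax xy yb dfK e0.
have K0 : 0 <= K by apply: le_trans (ltW (dfK x _)); rewrite ?lexx ?xy.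
have [d d0 var_small] := fac e0.
have [U [oU NU Ud]] := lebesgue_null_open_cover mN N0 d0.
have : lipschitz_upto f U K x y.
  apply: real_induction xy (lipschitz_upto_refl f U K x) _ => T /andP[xT Ty].
  have [NT|NT] := pselect (N T).
    have /nbhs_ballP [r /= r0 TrU] : nbhs T U.
      by move: oU; rewrite openE => /(_ T (NU T NT)).
    exists r => // t T' /andP[xt tT] Tt Pt /andP[TT' _] T'T.
    apply: lipschitz_upto_cover Pt => //; first exact: le_trans TT'.
    move=> z /=; rewrite in_itv /= => /andP[tz zT']; apply: TrU.
    by rewrite /ball /= ltr_distlC; apply/andP; split; lra.
  have aTb : a <= T <= b by rewrite (le_trans ax xT) (le_trans Ty yb).
  have dfT : `|df T| < K by apply: dfK; rewrite xT.
  have [r r0 f_lip] := is_derive_locally_lipschitz (fder aTb NT) dfT.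
  exists r => // t T' /andP[_ tT] Tt Pt /andP[TT' _] T'T.
  apply: lipschitz_upto_lipschitz Pt; first exact: le_trans TT'.
  have fT' := f_lip T' ltac:(rewrite ger0_norm ?subr_ge0 //; lra).
  have ft := f_lip t ltac:(rewrite distrC ger0_norm ?subr_ge0 //; lra).
  rewrite [`|T' - T|]ger0_norm ?subr_ge0 // in fT'.
  rewrite (distrC (f t)) (distrC t) [`|T - t|]ger0_norm ?subr_ge0 // in ft.
  have -> : K * (T' - t) = K * (T' - T) + K * (T - t) by ring.
  exact: le_trans (ler_distD (f T) _ _) (lerD fT' ft).
move=> [n [u [v [uv disj fy_x]]]].
suff : \sum_(i < n) `|f (v i) - f (u i)| < e by lra.
apply: var_small => //.
  move=> i /uv [xu uivi vy _]; split; first exact: le_trans ax xu.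
  by split => //; exact: le_trans yb.
rewrite -lte_fin (le_lt_trans _ Ud) // lebesgue_sum_itv_le //.
  exact: measurable_realfun.open_measurable.
by move=> i /uv [].
Qed.

Lemma abs_cont_lipschitz (K x y : R) : a <= x -> x <= y -> y <= b ->
  (forall t, x <= t <= y -> `|df t| <= K) -> `|f y - f x| <= K * (y - x).
Proof.
move=> ax xy yb dfK; apply/ler_addgt0Pr => e e0.
have yx1 : 0 < y - x + 1 by lra.
set e' := e / (y - x + 1).
have e'0 : 0 < e' by rewrite divr_gt0.
have dfK' t : x <= t <= y -> `|df t| < K + e' by move/dfK; lra.
have := abs_cont_lipschitz_eps ax xy yb dfK' e'0.
by rewrite -[e](divfK (lt0r_neq0 yx1)) -/e'; lra.
Qed.

End AbsContLipschitz.

Section SConcave.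
Variables (R : realType) (s : R) (I : set R).

Lemma s_concave_le_midpoint (h : R -> R) (t t' : R) :
  s_concave s I h -> I t -> I t' -> 0 <= h t' ->
  h t <= 2 `^ s * h ((t + t') / 2).
Proof.
move=> hs It It' ht'0.
have half0 : (0 : R) <= 1 / 2 by lra.
have := hs t t' It It' _ _ half0 half0 ltac:(lra).
have -> : 1 / 2 * t + 1 / 2 * t' = (t + t') / 2 by field.
have pow_half : 2 `^ s * (1 / 2) `^ s = 1 :> R.
  by rewrite -powRM ?mulf_div ?mul1r ?divff ?powR1 //; lra.
move=> concave.
have -> : h t = 2 `^ s * ((1 / 2) `^ s * h t) by rewrite mulrA pow_half mul1r.
rewrite ler_pM2l ?powR_gt0 // (le_trans _ concave) //.
by rewrite lerDl mulr_ge0 ?powR_ge0.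
Qed.

Lemma s_concave_powR_norm_le_midpoint (q : R) (df : R -> R) (t t' : R) :
  0 < q -> s_concave s I (fun x => `|df x| `^ q) -> I t -> I t' ->
  `|df t| <= 2 `^ (s / q) * `|df ((t + t') / 2)|.
Proof.
move=> q0 hs It It'.
have root z : 0 <= z -> (z `^ q) `^ q^-1 = z.
  by move=> z0; rewrite -powRrM divff ?gt_eqF // powRr1.
rewrite -(root `|df t|) // -(root `|df ((t + t') / 2)|) //.
rewrite powRrM -powRM ?powR_ge0 //.
apply: ge0_ler_powR; rewrite ?nnegrE ?mulr_ge0 ?powR_ge0 ?invr_ge0 ?(ltW q0) //.
exact: s_concave_le_midpoint hs It It' (powR_ge0 _ _).
Qed.

End SConcave.

Section IntervalIntegrals.
Variable R : realType.
Notation mu := (@lebesgue_measure R).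
Implicit Types (u v c r : R) (h k w : R -> R).

Lemma integrable_itv_continuous u v h : continuous h ->
  mu.-integrable `[u, v] (EFin \o h).
Proof.
move=> ch; apply: continuous_compact_integrable; first exact: segment_compact.
by apply: continuous_in_subspaceT => x _; exact: ch.
Qed.

Lemma integrable_itv_cst u v r : mu.-integrable `[u, v] (EFin \o cst r).
Proof. exact/integrable_itv_continuous/cst_continuous. Qed.

Lemma integrable_subitv u v u' v' h : u <= u' -> v' <= v ->
  mu.-integrable `[u, v] (EFin \o h) -> mu.-integrable `[u', v'] (EFin \o h).
Proof. by move=> uu' v'v; apply: integrableS => //; apply: subset_itv. Qed.

Lemma integrable_itv_subl u v c :
  mu.-integrable `[u, v] (EFin \o (fun t => t - c)).
Proof.
apply: integrable_itv_continuous => x.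
by apply: cvgB; [exact: cvg_id | exact: cvg_cst].
Qed.

Lemma integrable_itv_subr u v c :
  mu.-integrable `[u, v] (EFin \o (fun t => c - t)).
Proof.
apply: integrable_itv_continuous => x.
by apply: cvgB; [exact: cvg_cst | exact: cvg_id].
Qed.

Lemma measurable_fun_itv_integrable u v h :
  mu.-integrable `[u, v] (EFin \o h) -> measurable_fun `[u, v] h.
Proof. by move/(measurable_int mu)/measurable_realfun.measurable_EFinP. Qed.

Lemma integrable_itvM_weight u v h w :
  mu.-integrable `[u, v] (EFin \o h) -> measurable_fun `[u, v] w ->
  (forall t, u <= t <= v -> 0 <= w t <= 1) ->
  mu.-integrable `[u, v] (EFin \o (fun t => h t * w t)).
Proof.
move=> hi mw w01.
have w_bounded : [bounded w x | x in `[u, v]%classic].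
  exists 1; split => // M M1 x; rewrite /= in_itv /= => /w01 /andP[w0 w1].
  by rewrite ger0_norm // (le_trans w1) // ltW.
by apply: eq_integrable (integrableMl _ hi mw w_bounded) => // x _.
Qed.

Lemma lebesgue_measure_itv_cc u v : u <= v -> fine (mu `[u, v]) = v - u.
Proof.
move=> uv; rewrite lebesgue_measure_itv /= lte_fin.
by have [//|vu] := ltP u v; rewrite (@le_anti _ _ v u) ?vu // subrr.
Qed.

Lemma Rintegral_itv_cst u v r : u <= v ->
  \int[mu]_(t in `[u, v]) r = r * (v - u).
Proof. by move=> uv; rewrite Rintegral_cst // lebesgue_measure_itv_cc. Qed.

Lemma Rintegral_itv_weight_bounds u v w : u <= v ->
  (forall t, u <= t <= v -> 0 <= w t <= 1) ->
  mu.-integrable `[u, v] (EFin \o w) ->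
  0 <= \int[mu]_(t in `[u, v]) w t <= v - u.
Proof.
move=> uv w01 wi; apply/andP; split.
  by apply: Rintegral_ge0 => t; rewrite /= in_itv /= => /w01 /andP[].
rewrite -[v - u]mul1r -(Rintegral_itv_cst _ uv).
apply: le_Rintegral => //; first exact: integrable_itv_cst.
by move=> t; rewrite /= in_itv /= => /w01 /andP[].
Qed.

Lemma Rintegral_itv_split u v c h : u <= c -> c <= v ->
  mu.-integrable `[u, v] (EFin \o h) ->
  \int[mu]_(t in `[u, v]) h t =
  \int[mu]_(t in `[u, c]) h t + \int[mu]_(t in `[c, v]) h t.
Proof.
move=> uc cv hi.
have := Rintegral_itvB hi (x := c); rewrite !bnd_simp => /(_ uc cv) split.
rewrite -(@Rintegral_itv_obnd_cbnd _ c) -?split ?subrKC //.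
by apply: integrableS hi => //; apply: subset_itvr; rewrite bnd_simp.
Qed.


Lemma Rintegral_itv_subl u v : u <= v ->
  \int[mu]_(t in `[u, v]) (t - u) = (v - u) ^+ 2 / 2.
Proof.
rewrite le_eqVlt => /predU1P[<-|uv].
  by rewrite set_itv1 Rintegral_set1 subrr expr0n /= mul0r.
pose F t := (t - u) ^+ 2 / 2.
have dF (t : R) : is_derive t 1 F (t - u).
  by apply: is_derive_eq; rewrite !scaler0 add0r subr0 /GRing.scale /=; field.
have cF : continuous F.
  move=> t; apply: differentiable_continuous.
  by apply/derivable1_diffP; case: (dF t).
have -> : (v - u) ^+ 2 / 2 = fine ((F v)%:E - (F u)%:E)%E.
  by rewrite /F subrr expr0n /= mul0r subr0.
congr fine; apply: continuous_FTC2 uv _ _ _.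
- apply: continuous_in_subspaceT => x _.
  by apply: cvgB; [exact: cvg_id | exact: cvg_cst].
- split; first by move=> t _; case: (dF t).
  + exact/cvg_at_right_filter/cF.
  + exact/cvg_at_left_filter/cF.
- by move=> t _; rewrite derive1E; case: (dF t).
Qed.

Lemma Rintegral_itv_subr u v : u <= v ->
  \int[mu]_(t in `[u, v]) (v - t) = (v - u) ^+ 2 / 2.
Proof.
move=> uv.
have -> : \int[mu]_(t in `[u, v]) (v - t) =
    \int[mu]_(t in `[u, v]) ((v - u) - (t - u)).
  by apply: eq_Rintegral => t _; rewrite opprB addrA subrK.
rewrite RintegralB ?integrable_itv_cst ?integrable_itv_subl //.
by rewrite Rintegral_itv_subl // Rintegral_itv_cst //; field.
Qed.

Lemma le_norm_Rintegral_weight u v h w k :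
  mu.-integrable `[u, v] (EFin \o h) -> measurable_fun `[u, v] w ->
  (forall t, u <= t <= v -> 0 <= w t <= 1) ->
  mu.-integrable `[u, v] (EFin \o k) ->
  (forall t, u <= t <= v -> `|h t| <= k t) ->
  `|\int[mu]_(t in `[u, v]) (h t * w t)| <= \int[mu]_(t in `[u, v]) k t.
Proof.
move=> hi mw w01 ki hk.
have hwi := integrable_itvM_weight hi mw w01.
apply: le_trans (le_normr_Rintegral _ hwi) _ => //.
apply: le_Rintegral => //; first exact: integrable_norm hwi.
move=> t; rewrite /= in_itv /= => ut.
have /andP[w0 w1] := w01 t ut.
by rewrite normrM (ger0_norm w0) (le_trans _ (hk t ut)) // ler_piMr.
Qed.

End IntervalIntegrals.

Section SteffensenType.
Variables (R : realType) (a b c : R) (f w : R -> R).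
Notation mu := (@lebesgue_measure R).
Hypotheses (ac : a <= c) (cb : c <= b)
  (fi : mu.-integrable `[a, b] (EFin \o f))
  (wi : mu.-integrable `[a, b] (EFin \o w))
  (w01 : forall t, a <= t <= b -> 0 <= w t <= 1)
  (w_mass : \int[mu]_(t in `[a, b]) w t = c - a).

Let F t := f t - f c.

Let Fi : mu.-integrable `[a, b] (EFin \o F).
Proof. exact: integrableB _ fi (integrable_itv_cst _ _ _). Qed.

Let mw : measurable_fun `[a, b] w.
Proof. exact: measurable_fun_itv_integrable wi. Qed.

Lemma Rintegral_weight_deviation :
  \int[mu]_(t in `[a, c]) f t - \int[mu]_(t in `[a, b]) (f t * w t) =
  \int[mu]_(t in `[a, c]) (F t * (1 - w t))
  - \int[mu]_(t in `[c, b]) (F t * w t).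
Proof.
have Fwi := integrable_itvM_weight Fi mw w01.
have fwi := integrable_itvM_weight fi mw w01.
have Fac := integrable_subitv (lexx a) cb Fi.
have Fwac := integrable_subitv (lexx a) cb Fwi.
have int_f : \int[mu]_(t in `[a, c]) f t =
    \int[mu]_(t in `[a, c]) F t + f c * (c - a).
  rewrite RintegralB ?integrable_itv_cst ?Rintegral_itv_cst ?subrK //.
  exact: integrable_subitv (lexx a) cb fi.
have int_fw : \int[mu]_(t in `[a, b]) (f t * w t) =
    \int[mu]_(t in `[a, b]) (F t * w t) + f c * (c - a).
  have -> : \int[mu]_(t in `[a, b]) (F t * w t) =
      \int[mu]_(t in `[a, b]) (f t * w t - f c * w t).
    by apply: eq_Rintegral => t _; rewrite mulrBl.
  rewrite RintegralB ?RintegralZl -?w_mass ?subrK //.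
  exact: integrableZl wi.
have int_F1w : \int[mu]_(t in `[a, c]) (F t * (1 - w t)) =
    \int[mu]_(t in `[a, c]) F t - \int[mu]_(t in `[a, c]) (F t * w t).
  have -> : \int[mu]_(t in `[a, c]) (F t * (1 - w t)) =
      \int[mu]_(t in `[a, c]) (F t - F t * w t).
    by apply: eq_Rintegral => t _; rewrite mulrBr mulr1.
  exact: RintegralB.
rewrite int_f int_fw int_F1w (Rintegral_itv_split ac cb Fwi).
ring.
Qed.

Lemma Rintegral_weight_deviation_le (K1 K2 : R) :
  (forall t, a <= t <= c -> `|f t - f c| <= K1 * (c - t)) ->
  (forall t, c <= t <= b -> `|f t - f c| <= K2 * (t - c)) ->
  `|\int[mu]_(t in `[a, c]) f t - \int[mu]_(t in `[a, b]) (f t * w t)|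
    <= K1 * ((c - a) ^+ 2 / 2) + K2 * ((b - c) ^+ 2 / 2).
Proof.
move=> fK1 fK2; rewrite Rintegral_weight_deviation.
apply: le_trans (ler_normB _ _) (lerD _ _).
- rewrite -Rintegral_itv_subr // -RintegralZl ?integrable_itv_subr //.
  apply: le_norm_Rintegral_weight => //.
  + exact: integrable_subitv (lexx a) cb Fi.
  + apply: measurable_fun_itv_integrable.
    apply: integrable_subitv (lexx a) cb _.
    exact: integrableB _ (integrable_itv_cst a b 1) wi.
  + move=> t /andP[a_t tc]; have /andP[w0 w1] : 0 <= w t <= 1.
      by apply: w01; rewrite a_t (le_trans tc cb).
    by apply/andP; split; lra.
  + exact: integrableZl (integrable_itv_subr _ _ _).
- rewrite -Rintegral_itv_subl // -RintegralZl ?integrable_itv_subl //.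
  apply: le_norm_Rintegral_weight => //.
  + exact: integrable_subitv ac (lexx b) Fi.
  + exact: measurable_fun_itv_integrable (integrable_subitv ac (lexx b) wi).
  + by move=> t /andP[ct tb]; apply: w01; rewrite tb (le_trans ac ct).
  + exact: integrableZl (integrable_itv_subl _ _ _).
Qed.

End SteffensenType.

Lemma powR2_half_le (R : realType) (s q : R) : 1 <= q ->
  2 `^ (s / q) / 2 <= 2 `^ ((s - 1) / q).
Proof.
move=> q1; rewrite ler_pdivrMr //.
have -> : 2 `^ ((s - 1) / q) * 2 = 2 `^ ((s - 1) / q + 1) :> R.
  by rewrite powRD ?pnatr_eq0 ?implybT // powRr1.
apply: ler_powR; first by rewrite ler1n.
have -> : (s - 1) / q + 1 = s / q + (q - 1) / q.
  by field; rewrite gt_eqF //; lra.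
by rewrite lerDl divr_ge0 //; lra.
Qed.

Section SConcaveDerivative.
Variables (R : realType) (a b s q : R) (f df : R -> R) (N : set R).
Notation mu := (@lebesgue_measure R).
Hypotheses (q1 : 1 <= q) (fac : abs_cont_on a b f) (mN : measurable N)
  (N0 : lebesgue_measure N = 0%E)
  (fder : forall t, a <= t <= b -> ~ N t -> is_derive t 1 f (df t))
  (dfq_concave : s_concave s `[a, b] (fun t => `|df t| `^ q)).

Lemma s_concave_lipschitz_piece p p' x y :
  a <= p -> p <= x -> x <= y -> y <= p' -> p' <= b ->
  `|f y - f x| <= 2 `^ (s / q) * `|df ((p + p') / 2)| * (y - x).
Proof.
move=> ap px xy yp' p'b.
apply: (abs_cont_lipschitz fac mN N0 fder) => [||| t /andP[xt ty]]; try lra.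
have -> : (p + p') / 2 = (t + (p + p' - t)) / 2 by field.
have q0 : 0 < q := lt_le_trans ltr01 q1.
by apply: (s_concave_powR_norm_le_midpoint q0 dfq_concave);
  rewrite /= in_itv /=; apply/andP; split; lra.
Qed.

Lemma s_concave_weight_bound c w : a <= c -> c <= b ->
  mu.-integrable `[a, b] (EFin \o f) -> mu.-integrable `[a, b] (EFin \o w) ->
  (forall t, a <= t <= b -> 0 <= w t <= 1) ->
  \int[mu]_(t in `[a, b]) w t = c - a ->
  `|\int[mu]_(t in `[a, c]) f t - \int[mu]_(t in `[a, b]) (f t * w t)|
    <= 2 `^ ((s - 1) / q) * ((c - a) ^+ 2 * `|df ((a + c) / 2)|
                            + (b - c) ^+ 2 * `|df ((c + b) / 2)|).
Proof.
move=> ac cb fi wi w01 w_mass.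
apply: le_trans (Rintegral_weight_deviation_le ac cb fi wi w01 w_mass _ _) _.
- move=> t /andP[a_t tc]; rewrite distrC.
  exact: s_concave_lipschitz_piece (lexx a) a_t tc (lexx c) cb.
- move=> t /andP[ct tb].
  exact: s_concave_lipschitz_piece ac (lexx c) ct tb (lexx b).
set C := 2 `^ (s / q); set X1 := `|df _|; set X2 := `|df _|.
have -> : C * X1 * ((c - a) ^+ 2 / 2) + C * X2 * ((b - c) ^+ 2 / 2)
    = C / 2 * ((c - a) ^+ 2 * X1 + (b - c) ^+ 2 * X2) by ring.
apply: ler_wpM2r; last exact: (powR2_half_le s q1).
by rewrite /X1 /X2 addr_ge0 // mulr_ge0 // sqr_ge0.
Qed.

Lemma s_concave_weight_bound_left w : a <= b ->
  mu.-integrable `[a, b] (EFin \o f) -> mu.-integrable `[a, b] (EFin \o w) ->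
  (forall t, a <= t <= b -> 0 <= w t <= 1) ->
  let lam := \int[mu]_(t in `[a, b]) w t in
  `|\int[mu]_(t in `[a, a + lam]) f t - \int[mu]_(t in `[a, b]) (f t * w t)|
    <= 2 `^ ((s - 1) / q) * (lam ^+ 2 * `|df (a + lam / 2)|
                            + (b - a - lam) ^+ 2 * `|df ((a + b + lam) / 2)|).
Proof.
move=> ab fi wi w01 /=; set lam := \int[mu]_(t in `[a, b]) w t.
have /andP[lam0 lam_le] : 0 <= lam <= b - a.
  exact: Rintegral_itv_weight_bounds ab w01 wi.
have w_mass : \int[mu]_(t in `[a, b]) w t = a + lam - a.
  by rewrite addrAC subrr add0r.
have := @s_concave_weight_bound (a + lam) w ltac:(lra) ltac:(lra) fi wi w01
  w_mass.
rewrite addrAC subrr add0r.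
have -> : (a + (a + lam)) / 2 = a + lam / 2 by field.
have -> : (a + lam + b) / 2 = (a + b + lam) / 2 by field.
by have -> : b - (a + lam) = b - a - lam by ring.
Qed.

Lemma s_concave_weight_bound_right w : a <= b ->
  mu.-integrable `[a, b] (EFin \o f) -> mu.-integrable `[a, b] (EFin \o w) ->
  (forall t, a <= t <= b -> 0 <= w t <= 1) ->
  let lam := \int[mu]_(t in `[a, b]) w t in
  `|\int[mu]_(t in `[a, b]) (f t * w t) - \int[mu]_(t in `[b - lam, b]) f t|
    <= 2 `^ ((s - 1) / q) * (lam ^+ 2 * `|df (b - lam / 2)|
                            + (b - a - lam) ^+ 2 * `|df ((a + b - lam) / 2)|).
Proof.
move=> ab fi wi w01 /=; set lam := \int[mu]_(t in `[a, b]) w t.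
have /andP[lam0 lam_le] : 0 <= lam <= b - a.
  exact: Rintegral_itv_weight_bounds ab w01 wi.
have w'01 t : a <= t <= b -> 0 <= 1 - w t <= 1.
  by move/w01 => /andP[w0 w1]; apply/andP; split; lra.
have w'i : mu.-integrable `[a, b] (EFin \o (fun t => 1 - w t)).
  exact: integrableB _ (integrable_itv_cst a b 1) wi.
have w'_mass : \int[mu]_(t in `[a, b]) (1 - w t) = b - lam - a.
  rewrite RintegralB ?integrable_itv_cst // Rintegral_itv_cst // mul1r -/lam.
  by ring.
have -> : \int[mu]_(t in `[a, b]) (f t * w t)
      - \int[mu]_(t in `[b - lam, b]) f t
    = \int[mu]_(t in `[a, b - lam]) f t
      - \int[mu]_(t in `[a, b]) (f t * (1 - w t)).
  have -> : \int[mu]_(t in `[a, b]) (f t * (1 - w t)) =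
      \int[mu]_(t in `[a, b]) (f t - f t * w t).
    by apply: eq_Rintegral => t _; rewrite mulrBr mulr1.
  have ac : a <= b - lam by lra.
  have cb : b - lam <= b by lra.
  have fwi := integrable_itvM_weight fi (measurable_fun_itv_integrable wi) w01.
  by rewrite RintegralB // (Rintegral_itv_split ac cb fi); ring.
have := @s_concave_weight_bound (b - lam) _ ltac:(lra) ltac:(lra) fi w'i w'01
  w'_mass.
have -> : (a + (b - lam)) / 2 = (a + b - lam) / 2 by field.
have -> : (b - lam + b) / 2 = b - lam / 2 by field.
have -> : b - (b - lam) = lam by ring.
have -> : b - lam - a = b - a - lam by ring.
by rewrite [X in _ * X]addrC.
Qed.

End SConcaveDerivative.

Unset Implicit Arguments.

Theorem theorem2p7 (R : realType) (a b s q : R) (f g df : R -> R) :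
  0 <= a -> a < b ->
  0 < s -> s <= 1 -> 1 < q ->
  (@lebesgue_measure R).-integrable `[a, b] (EFin \o f) ->
  (@lebesgue_measure R).-integrable `[a, b] (EFin \o g) ->
  (forall t, a <= t <= b -> 0 <= g t <= 1) ->
  (@lebesgue_measure R).-integrable `[a, b] (EFin \o (g \* df)) ->
  abs_cont_on a b f ->
  {ae @lebesgue_measure R, forall t, t \in `[a, b] -> is_derive t 1 f (df t)} ->
  s_concave s `[a, b]%classic (fun t => `|df t| `^ q) ->
  let lam := Rintegral (@lebesgue_measure R) `[a, b] g in
  `|Rintegral (@lebesgue_measure R) `[a, a + lam] f
    - Rintegral (@lebesgue_measure R) `[a, b] (f \* g)|
    <= 2 `^ ((s - 1) / q) *
       (lam ^+ 2 * `|df (a + lam / 2)|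
        + (b - a - lam) ^+ 2 * `|df ((a + b + lam) / 2)|)
  /\
  `|Rintegral (@lebesgue_measure R) `[a, b] (f \* g)
    - Rintegral (@lebesgue_measure R) `[b - lam, b] f|
    <= 2 `^ ((s - 1) / q) *
       (lam ^+ 2 * `|df (b - lam / 2)|
        + (b - a - lam) ^+ 2 * `|df ((a + b - lam) / 2)|).
Proof.
move=> _ ab _ _ q1 fi gi g01 _ fac [N [mN N0 Nder]] dfq_concave lam.
have fder t : a <= t <= b -> ~ N t -> is_derive t 1 f (df t).
  move=> abt Nt; have : t \in `[a, b] -> is_derive t 1 f (df t).
    by apply: contrapT => not_der; exact/Nt/Nder.
  by apply; rewrite in_itv.
have [ab' q1'] := (ltW ab, ltW q1).
split.
- exact: s_concave_weight_bound_left q1' fac mN N0 fder dfq_concave _ ab' fi gi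
    g01.
- exact: s_concave_weight_bound_right q1' fac mN N0 fder dfq_concave _ ab' fi gi
    g01.
Qed.
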